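(* Let $N\ge 2$ and $m$ be integers and let $v$ be a nonzero complex number with $v^N=-1$. For integers $n$ put $\{n\}=v^n-v^{-n}$, $A(j,k)=\{j-k\}\{j+k\}$, $S(k,l)=\prod_{k\le n\le l}\{n\}$, and for a finite family ${\prod'_{i\in I}}a_i=\sum_{i\in I}\prod_{r\in I\setminus\{i\}}a_r$. Define $$D(j,l)=(v^j+v^{-j})\Big(\prod_{k=1}^lA(j,k)+2\{j\}^2{\prod_{1\le k\le l}}'A(j,k)\Big)+\frac{mj}{2}\{j\}\prod_{k=1}^lA(j,k).$$ Then for $1\le j\le N-1$ and $0\le l\le N-1$, $$D(N-j,l)+D(j,l)=\frac{mN}{2}S(j-l,j+l).$$ *)

From mathcomp Require Import all_boot all_order all_algebra.
Set Implicit Arguments. Unset Strict Implicit. Unset Printing Implicit Defensive.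
Import Order.TTheory GRing.Theory Num.Theory.
Local Open Scope ring_scope.

Section Defs.
Variable C : numClosedFieldType.
Variable v : C.

Definition qbr (n : int) : C := v ^ n - v ^ (- n).

Definition qA (j k : int) : C := qbr (j - k) * qbr (j + k).

(* S(k,l) = prod_{k <= n <= l} {n}  (empty product = 1 if l < k) *)
Definition qS (k l : int) : C :=
  let len : nat := absz (l - k + 1)%R in
  \prod_(i < len | (k + i%:Z <= l)%R) qbr (k + i%:Z).

Definition qD (m : int) (j : int) (l : nat) : C :=
  (v ^ j + v ^ (- j)) *
    (\prod_(1 <= k < l.+1) qA j k%:Z
     + 2 * qbr j ^+ 2 *
       \sum_(1 <= i < l.+1) \prod_(1 <= k < l.+1 | k != i) qA j k%:Z)
  + (m * j)%:~R / 2 * qbr j * \prod_(1 <= k < l.+1) qA j k%:Z.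
End Defs.

From mathcomp Require Import all_boot all_order all_algebra.
From mathcomp Require Import ring zify.
From Stdlib Require Import FunctionalExtensionality.
Import Order.TTheory GRing.Theory Num.Theory.
Local Open Scope ring_scope.

(* Since v^N = -1, the bracket satisfies {N - n} = {n}, so A(N - j, k) = A(j, k)
   and both big brackets of D(N - j, l) and D(j, l) coincide, while their
   prefactors v^(N-j) + v^(j-N) = -(v^j + v^-j) are opposite. Only the terms
   linear in m survive, adding up to (mN/2) {j} prod_k A(j,k), and the
   product {j} prod_k {j-k}{j+k} is S(j-l, j+l) reordered from the centre. *)

Section CentredProduct.
Variables (C : numClosedFieldType) (v : C).

Lemma prod_qbr_centred (j : int) (l : nat) :
  \prod_(0 <= i < (2 * l).+1) qbr v (j - l%:Z + i%:Z)
  = qbr v j * \prod_(1 <= k < l.+1) qA v j k%:Z.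
Proof.
elim: l => [|l IHl]; first by rewrite big_nat1 big_geq // subr0 addr0 mulr1.
have -> : ((2 * l.+1).+1 = ((2 * l).+1).+2)%N by rewrite mulnS.
rewrite big_nat_recl // big_nat_recr //=.
have shift i : qbr v (j - l.+1%:Z + i.+1%:Z) = qbr v (j - l%:Z + i%:Z).
  by congr qbr; lia.
rewrite (eq_bigr _ (fun i _ => shift i)) IHl [in RHS]big_nat_recr //= /qA.
have -> : j - l.+1%:Z + (2 * l).+2%:Z = j + l.+1%:Z by lia.
rewrite addr0; ring.
Qed.

Lemma qS_centred (j : int) (l : nat) :
  qS v (j - l%:Z) (j + l%:Z) = qbr v j * \prod_(1 <= k < l.+1) qA v j k%:Z.
Proof.
rewrite /qS.
have -> : absz (j + l%:Z - (j - l%:Z) + 1) = (2 * l).+1 by lia.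
rewrite [LHS](eq_bigl xpredT) => [|i /=]; last by have := ltn_ord i; lia.
by rewrite -(big_mkord xpredT (fun i => qbr v (j - l%:Z + i%:Z))) prod_qbr_centred.
Qed.

End CentredProduct.

Section RootOfMinusOne.
Variables (C : numClosedFieldType) (N : nat) (v : C).
Hypotheses (hv0 : v != 0) (hvN : v ^+ N = -1).

Lemma expz_subN (n : int) : v ^ (N%:Z - n) = - v ^ (- n).
Proof. by rewrite expfzDr // -exprnP hvN mulN1r. Qed.

Lemma expz_opp_subN (n : int) : v ^ (- (N%:Z - n)) = - v ^ n.
Proof. by rewrite opprB addrC expfzDr // -exprnN hvN invrN invr1 mulN1r. Qed.

Lemma qbr_subN (n : int) : qbr v (N%:Z - n) = qbr v n.
Proof. by rewrite /qbr expz_subN expz_opp_subN opprK addrC. Qed.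

Lemma qA_subN (j : int) : qA v (N%:Z - j) = qA v j.
Proof.
apply: functional_extensionality => k.
rewrite /qA mulrC -(qbr_subN (j + k)) -(qbr_subN (j - k)).
by congr (qbr _ _ * qbr _ _); ring.
Qed.

End RootOfMinusOne.

Theorem lemma2p5 (C : numClosedFieldType) (N : nat) (m : int) (v : C)
  (hN : (2 <= N)%N) (hv0 : v != 0) (hvN : v ^+ N = -1)
  (j l : nat) (hj1 : (1 <= j)%N) (hj2 : (j <= N - 1)%N) (hl : (l <= N - 1)%N) :
  qD v m (N%:Z - j%:Z) l + qD v m j%:Z l
  = (m * N%:Z)%:~R / 2 * qS v (j%:Z - l%:Z) (j%:Z + l%:Z).
Proof.
rewrite qS_centred /qD qA_subN // qbr_subN // expz_subN // expz_opp_subN //.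
rewrite !intrM intrB; ring.
Qed.
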